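(* Let $m\ge 1$, let $\ell_1,\dots,\ell_m$ be positive integers, let $p\in[m]$, put $n=\ell_1+\cdots+\ell_m$, and define $\ell'=(\ell'_1,\dots,\ell'_m)$ by $\ell'_i=\ell_i+1$ for $i\neq p$ and $\ell'_p=\ell_p$. Let $\alpha$ be a cyclic word (of length $n+m-1$) over $[m]$ in which each letter $i$ occurs exactly $\ell'_i$ times. Then $\alpha\in\textsf{L-NCN}(\ell')$ if and only if $\alpha=\overline{\omega}$ for some valid word $\omega\in[m]^{n+m-2}$.
   Context: A subword of a word means a not necessarily contiguous subsequence. Given $m$, $p\in[m]$ and positive integers $\ell_1,\dots,\ell_m$ with $n=\sum\ell_i$, a word $\omega\in[m]^{n+m-2}$ is called valid if: the letter $p$ occurs exactly $\ell_p-1$ times; each letter $j\in[m]\setminus\{p\}$ occurs exactly $\ell_j+1$ times; for $i\neq j$ there is no subword $ijij$; and for $i\neq p$ there is no subword $ipi$. A cyclic word is an equivalence class of words under cyclic rotation. For a valid word $\omega$, $\overline{\omega}$ denotes the cyclic word (rotation class) of the word $\omega p$ obtained by appending one letter $p$ at the end (i.e. inserting $p$ between the last and first letters cyclically). For a sequence $x=(x_1,\dots,x_t)$ of positive integers with $N=\sum x_i$, $\textsf{L-NC}(x)$ is the set of words $w=w_1\cdots w_N$ over $[t]$ in which each letter $i$ occurs exactly $x_i$ times and such that there are no indices $a<b<c<d$ and letters $i\neq j$ with $w_a=w_c=i$, $w_b=w_d=j$ (equivalently, the partition of $[N]$ into the sets $\{a: w_a=i\}$ is noncrossing, the block of size $x_i$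 being labeled $i$); these are the labeled noncrossing partitions of type $x$. This condition is invariant under cyclic rotation, and $\textsf{L-NCN}(x)$ denotes the set of rotation classes of elements of $\textsf{L-NC}(x)$ (labeled noncrossing necklaces of type $x$). *)

(* Words are sequences of natural numbers; the alphabet [m] is {1,...,m}. *)
From mathcomp Require Import ssreflect ssrfun ssrbool eqtype ssrnat seq choice fintype bigop.
Set Implicit Arguments. Unset Strict Implicit. Unset Printing Implicit Defensive.

Definition over_alphabet (m : nat) (w : seq nat) : Prop :=
  forall x, x \in w -> 1 <= x <= m.

Definition lsum (m : nat) (l : nat -> nat) : nat := \sum_(1 <= i < m.+1) l i.

Definition lprime (p : nat) (l : nat -> nat) (i : nat) : nat :=
  if i == p then l i else (l i).+1.

(* valid words (subword = not necessarily contiguous subsequence = subseq) *)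
Definition valid (m p : nat) (l : nat -> nat) (w : seq nat) : Prop :=
  [/\ size w = lsum m l + m - 2 /\ over_alphabet m w,
      count_mem p w = (l p).-1,
      (forall j, 1 <= j <= m -> j != p -> count_mem j w = (l j).+1),
      (forall i j, i != j -> ~~ subseq [:: i; j; i; j] w) &
      (forall i, i != p -> ~~ subseq [:: i; p; i] w)].

Definition noncrossing (w : seq nat) : Prop :=
  forall a b c d, a < b -> b < c -> c < d -> d < size w ->
    nth 0 w a = nth 0 w c -> nth 0 w b = nth 0 w d -> nth 0 w a = nth 0 w b.

Definition LNC (t : nat) (x : nat -> nat) (w : seq nat) : Prop :=
  [/\ size w = \sum_(1 <= i < t.+1) x i,
      over_alphabet t w,
      (forall i, 1 <= i <= t -> count_mem i w = x i) &
      noncrossing w].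

Definition cyc_eq (u v : seq nat) : Prop := exists k, rot k u = v.

(* a cyclic word (represented by any word alpha of its class) lies in L-NCN(x) *)
Definition in_LNCN (t : nat) (x : nat -> nat) (alpha : seq nat) : Prop :=
  exists beta, LNC t x beta /\ cyc_eq beta alpha.

(* alpha equals bar(omega) : the rotation class of omega p *)
Definition is_bar (p : nat) (omega alpha : seq nat) : Prop :=
  cyc_eq (rcons omega p) alpha.

From mathcomp Require Import ssreflect ssrfun ssrbool eqtype ssrnat seq choice fintype bigop.
From mathcomp Require Import path zify.
Set Implicit Arguments. Unset Strict Implicit. Unset Printing Implicit Defensive.

(* The proof rests on one combinatorial observation: appending a letter x to a
   word w creates a crossing i j i j exactly when either w already has one, or
   w has a subword j x j with j <> x.  Hence, for a word ending with p, the
   noncrossing condition on (omega p) is precisely the conjunction of the two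
   pattern-avoidance conditions defining validity of omega.

   The theorem follows by rotating any representative of the cyclic
   word so that it ends with an occurrence of p. *)

Section Subwords.
Variables (T : eqType) (x0 : T).

Lemma subseq_consP (x : T) (t s : seq T) :
  subseq (x :: t) s <->
  exists2 a, a < size s & nth x0 s a = x /\ subseq t (drop a.+1 s).
Proof.
elim: s => [|y s IH] /=; first by split=> // -[].
split.
- case: eqP => [<- sub_t|_ /IH [a a_lt [nth_a sub_t]]]; first by exists 0; rewrite ?drop0.
  by exists a.+1.
- case=> -[|a] /= a_lt [nth_a sub_t]; first by rewrite nth_a eqxx -(drop0 s).
  have sub_xt : subseq (x :: t) s by apply/IH; exists a.
  by case: eqP => // _; apply: cons_subseq sub_xt.
Qed.

Lemma subseq_cons_dropP (k : nat) (x : T) (t s : seq T) :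
  subseq (x :: t) (drop k s) <->
  exists2 a, k <= a < size s & nth x0 s a = x /\ subseq t (drop a.+1 s).
Proof.
rewrite subseq_consP size_drop; split.
- case=> a a_lt; rewrite nth_drop drop_drop addSn [a + k]addnC => sub.
  by exists (k + a); first lia.
- case=> a a_range [nth_a sub]; exists (a - k); first lia.
  by rewrite nth_drop drop_drop addSn subnK ?subnKC //; case/andP: a_range.
Qed.

Definition crossfree (w : seq T) : Prop :=
  forall i j : T, i != j -> ~~ subseq [:: i; j; i; j] w.

(* Reversal maps the pattern i j i j to j i j i, so it preserves crossings. *)
Lemma crossfree_rev (w : seq T) : crossfree (rev w) <-> crossfree w.
Proof.
suff rev_cf u : crossfree u -> crossfree (rev u) by split=> /rev_cf; rewrite ?revK.
move=> cf_u i j ij; rewrite -[[:: i; j; i; j]]/(rev [:: j; i; j; i]) subseq_rev.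
by apply: cf_u; rewrite eq_sym.
Qed.

(* Prepending x creates a crossing iff it creates a subword x j x j, i.e. iff
   w contains j x j for some j <> x. *)
Lemma crossfree_cons (x : T) (w : seq T) :
  crossfree (x :: w) <->
  crossfree w /\ (forall j, j != x -> ~~ subseq [:: j; x; j] w).
Proof.
split=> [cf_xw | [cf_w avoid_jxj] i j ij /=].
- split=> [i j ij | j jx].
    apply: contra (cf_xw i j ij) => sub /=.
    by case: eqP => // _; apply: cons_subseq sub.
  by have := cf_xw x j; rewrite eq_sym jx => /(_ isT); rewrite /= eqxx.
- by case: eqP => [ix|_]; [rewrite ix; apply: avoid_jxj; rewrite -ix eq_sym | apply: cf_w].
Qed.

Lemma crossfree_rcons (x : T) (w : seq T) :
  crossfree (rcons w x) <->
  crossfree w /\ (forall j, j != x -> ~~ subseq [:: j; x; j] w).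
Proof.
rewrite -crossfree_rev rev_rcons crossfree_cons crossfree_rev.
by split=> -[cf_w avoid]; split=> // j jx; move: (avoid j jx);
  rewrite -[[:: j; x; j]]/(rev [:: j; x; j]) subseq_rev.
Qed.

Lemma crossfree_catC (u v : seq T) : crossfree (u ++ v) <-> crossfree (v ++ u).
Proof.
elim: u v => [|x u IH] v; first by rewrite cats0.
rewrite cat_cons crossfree_cons -crossfree_rcons rcons_cat.
by rewrite IH cat_rcons.
Qed.

Lemma crossfree_rot (k : nat) (w : seq T) : crossfree (rot k w) <-> crossfree w.
Proof. by rewrite /rot crossfree_catC cat_take_drop. Qed.

Lemma size_sum_count (r w : seq T) :
  uniq r -> {subset w <= r} -> size w = \sum_(i <- r) count_mem i w.
Proof.
move=> uniq_r; elim: w => [|x w IH] w_sub_r /=; first by rewrite big1.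
rewrite big_split /= -IH => [|y y_in]; last by apply: w_sub_r; rewrite inE y_in orbT.
rewrite (bigD1_seq x) ?w_sub_r ?mem_head //= eqxx big1 // => i.
by rewrite eq_sym => /negbTE ->.
Qed.

End Subwords.

Lemma noncrossingP (w : seq nat) : noncrossing w <-> crossfree w.
Proof.
split=> [nc_w i j ij | cf_w a b c d ab bc cd d_lt nth_ac nth_bd].
- apply/negP; rewrite -[w in subseq _ w]drop0.
  case/(subseq_cons_dropP 0 0) => a /andP[_ a_lt] [nth_a].
  case/(subseq_cons_dropP 0) => b /andP[ab _] [nth_b].
  case/(subseq_cons_dropP 0) => c /andP[bc _] [nth_c].
  case/(subseq_cons_dropP 0) => d /andP[cd d_lt] [nth_d _].
  move/eqP: ij; apply; rewrite -nth_a -nth_b.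
  by apply: nc_w ab bc cd d_lt _ _; rewrite ?nth_a ?nth_b.
- apply: (contraTeq (cf_w _ _)); rewrite -[w in subseq _ w]drop0 {2}nth_ac {2}nth_bd.
  have [a_lt b_lt c_lt] : [/\ a < size w, b < size w & c < size w] by split; lia.
  apply/(subseq_cons_dropP 0 0); exists a => //; split=> //.
  apply/(subseq_cons_dropP 0); exists b; first by rewrite ab b_lt.
  split=> //; apply/(subseq_cons_dropP 0); exists c; first by rewrite bc c_lt.
  split=> //; apply/(subseq_cons_dropP 0); exists d; first by rewrite cd d_lt.
  by split=> //; apply: sub0seq.
Qed.

Lemma rotate_to_end (x : nat) (w : seq nat) :
  x \in w -> exists u, cyc_eq (rcons u x) w.
Proof.
case/splitPr=> s1 s2; exists (s2 ++ s1), (size s2).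
by rewrite rcons_cat rot_size_cat cat_rcons.
Qed.

Lemma lprime_sum (m p : nat) (l : nat -> nat) : 1 <= p <= m ->
  \sum_(1 <= i < m.+1) lprime p l i = lsum m l + (m - 1).
Proof.
move=> p_range; rewrite /lsum.
rewrite (eq_bigr (fun i => l i + (i != p))) => [|i _]; last first.
  by rewrite /lprime; case: eqP => _; rewrite ?addn0 ?addn1.
rewrite big_split /=; congr (_ + _).
have p_in : p \in index_iota 1 m.+1 by rewrite mem_index_iota ltnS.
rewrite (bigD1_seq p) ?iota_uniq //= eqxx add0n.
rewrite (eq_bigr (fun=> 1)) => [|i /negbTE -> //]; rewrite sum1_count.
have := count_predC (pred1 p) (index_iota 1 m.+1).
rewrite count_uniq_mem ?iota_uniq // p_in size_iota.
by rewrite (@eq_count _ (predC (pred1 p)) (predC1 p)) //; lia.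
Qed.

Lemma size_over_alphabet (t : nat) (w : seq nat) :
  over_alphabet t w -> size w = \sum_(1 <= i < t.+1) count_mem i w.
Proof.
move=> w_over; apply: size_sum_count; first exact: iota_uniq.
by move=> x /w_over; rewrite mem_index_iota ltnS.
Qed.

Lemma LNC_rot (t k : nat) (x : nat -> nat) (w : seq nat) :
  LNC t x (rot k w) <-> LNC t x w.
Proof.
have cnt_rot i : count_mem i (rot k w) = count_mem i w.
  by apply/permP; rewrite perm_rot.
have nc_rot : noncrossing (rot k w) <-> noncrossing w.
  by rewrite !noncrossingP crossfree_rot.
rewrite /LNC /over_alphabet size_rot.
split=> -[size_w over_w cnt_w nc_w]; split=> //.
- by move=> y y_in; apply: over_w; rewrite mem_rot.
- by move=> i /cnt_w; rewrite cnt_rot.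
- exact/nc_rot.
- by move=> y; rewrite mem_rot; apply: over_w.
- by move=> i /cnt_w; rewrite cnt_rot.
- exact/nc_rot.
Qed.

Lemma valid_iff_LNC (m p : nat) (l : nat -> nat) (omega : seq nat) :
  1 <= p <= m -> 0 < l p ->
  valid m p l omega <-> LNC m (lprime p l) (rcons omega p).
Proof.
move=> p_range lp_pos.
have over_rcons : over_alphabet m (rcons omega p) <-> over_alphabet m omega.
  split=> over_om y.
  - by move=> y_in; apply: over_om; rewrite mem_rcons inE y_in orbT.
  - by rewrite mem_rcons inE => /orP[/eqP -> // | /over_om].
have cnt_rcons i : count_mem i (rcons omega p) = count_mem i omega + (p == i).
  by rewrite -cats1 count_cat /= addn0.
have sum_l' := lprime_sum l p_range.
rewrite /valid /LNC; split.
- case=> -[size_om over_om] cnt_p cnt_j cf_om avoid_ipi.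
  have cnt_l' i : 1 <= i <= m -> count_mem i (rcons omega p) = lprime p l i.
    move=> i_range; rewrite cnt_rcons /lprime eq_sym.
    by case: eqP => [->|/eqP ip]; rewrite ?cnt_p ?cnt_j ?addn0 ?addn1 //; lia.
  have over_r := over_rcons.2 over_om.
  split=> //; last exact/noncrossingP/crossfree_rcons.
  rewrite (size_over_alphabet over_r).
  by apply: eq_big_nat => i; rewrite ltnS => /cnt_l'.
- case=> size_r /over_rcons over_om cnt_l' /noncrossingP/crossfree_rcons[cf_om avoid_ipi].
  split=> //; first by split=> //; move: size_r; rewrite size_rcons sum_l'; lia.
  + by move: (cnt_l' p p_range); rewrite cnt_rcons /lprime !eqxx; lia.
  + by move=> j j_range jp; move: (cnt_l' j j_range);
      rewrite cnt_rcons /lprime eq_sym (negbTE jp) addn0.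
Qed.

Theorem mainTheorem1 (m p : nat) (l : nat -> nat) (alpha : seq nat) :
  1 <= m ->
  (forall i, 1 <= i <= m -> 0 < l i) ->
  1 <= p <= m ->
  size alpha = lsum m l + m - 1 ->
  over_alphabet m alpha ->
  (forall i, 1 <= i <= m -> count_mem i alpha = lprime p l i) ->
  (in_LNCN m (lprime p l) alpha <->
   exists omega, valid m p l omega /\ is_bar p omega alpha).
Proof.
move=> _ l_pos p_range _ _ _; have lp_pos := l_pos p p_range.
split.
- case=> beta [beta_LNC [k rot_beta]].
  have alpha_LNC : LNC m (lprime p l) alpha by rewrite -rot_beta LNC_rot.
  have p_in : p \in alpha.
    case: alpha_LNC => _ _ cnt _.
    by rewrite -has_pred1 has_count cnt // /lprime eqxx.
  have [omega [k' rot_omega]] := rotate_to_end p_in.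
  exists omega; split; last by exists k'.
  by apply/valid_iff_LNC => //; rewrite -(LNC_rot _ k') rot_omega.
- case=> omega [omega_valid bar_alpha].
  by exists (rcons omega p); split=> //; apply/valid_iff_LNC.
Qed.
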